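(* For all real $D,R\ge2$, \[ \#\mathcal E(D,R)\ll\frac{D^2R(\log R)^2}{\log D}, \] with an absolute implied constant.
   Context: For $\lambda\in\mathbb F_p^*$, $\rho(\lambda,p)=\min\{rs: r,s\text{ positive integers},\ r\equiv\lambda s\pmod p\}$. For real $D,R\ge2$, $\mathcal E(D,R)$ is the set of primes $p$ for which there exists $\lambda\in\mathbb F_p^*$ of multiplicative order $d$ with $3\le d<D$ and $\rho(\lambda,p)<R$. *)

From mathcomp Require Import all_boot.
From Stdlib Require Import Reals.

Definition mult_order (lam p d : nat) : Prop :=
  (0 < d)%N /\ (lam ^ d = 1 %[mod p])%N /\
  (forall k, (0 < k)%N -> (k < d)%N -> (lam ^ k <> 1 %[mod p])%N).

Definition rho_admissible (lam p m : nat) : Prop :=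
  exists r s, (0 < r)%N /\ (0 < s)%N /\ (r = lam * s %[mod p])%N /\ m = (r * s)%N.

Definition is_rho (lam p m : nat) : Prop :=
  rho_admissible lam p m /\ (forall m', rho_admissible lam p m' -> (m <= m')%N).

Definition in_E (D R : R) (p : nat) : Prop :=
  prime p /\
  exists lam d, (0 < lam)%N /\ (lam < p)%N /\ mult_order lam p d /\
    (3 <= d)%N /\ (INR d < D)%R /\
    exists m, is_rho lam p m /\ (INR m < R)%R.

(* Let p be in E(D,R), witnessed by lam of order d and rho(lam,p) = r s < R with
   r = lam s (mod p).  Then r^d = lam^d s^d = s^d (mod p), r <> s (else lam = 1),
   and d < p by Fermat, so p is one of the prime divisors exceeding d of the
   nonzero number |r^d - s^d| < R^d.  There are at most
   d log R / log (d + 1) <= D log R / log D of those, fewer than D exponents d,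
   and at most R (1 + log R) pairs (r, s) with r s < R, whence
   #E(D,R) <= D^2 R (1 + log R) log R / log D <= 3 D^2 R (log R)^2 / log D. *)

From mathcomp Require Import all_boot zify.
From mathcomp Require cyclic.
From Stdlib Require Import Reals Lra ClassicalEpsilon ZArith.

Set Implicit Arguments.
Unset Strict Implicit.

(* Importing Reals rebinds [^] on nat to [Nat.pow]; restore ssrnat's [expn]. *)
Local Notation "m ^ n" := (expn m n) : nat_scope.

Lemma powE : Nat.pow =2 expn.
Proof. by move=> a; elim=> [|b IH] //=; rewrite expnS IH multE. Qed.

Lemma eqn_mod_mul2l_coprime a p x y : coprime a p ->
  (a * x == a * y %[mod p]) = (x == y %[mod p]).
Proof.
move=> co_ap; wlog le_yx : x y / y <= x.
  move=> le_mod; have [/le_mod //|/ltnW/le_mod] := leqP y x.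
  by rewrite (eq_sym (x %% p)) (eq_sym (a * x %% p)).
by rewrite !eqn_mod_dvd ?leq_mul2l ?le_yx ?orbT // -mulnBr Gauss_dvdr // coprime_sym.
Qed.

Lemma mult_order_lt_prime lam p d : prime p -> 0 < lam < p ->
  mult_order lam p d -> d < p.
Proof.
move=> p_pr /andP[lam_gt0 lam_ltp] [_ [_ d_min]].
have co_lam_p : coprime lam p by rewrite coprime_sym prime_coprime // gtnNdvd.
have := cyclic.Euler_exp_totient co_lam_p.
rewrite totient_prime // -powE => fermat.
have p_gt1 := prime_gt1 p_pr.
case: (ltnP d p) => // le_pd.
case: (d_min p.-1 _ _ fermat); lia.
Qed.

Lemma in_E_dvdn_pow_sub D Rr p : in_E D Rr p ->
  exists d r s, [/\ 3 <= d < p, (INR d < D)%R, 0 < s < r,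
                    (INR (r * s) < Rr)%R & p %| r ^ d - s ^ d].
Proof.
move=> [p_pr [lam [d [lam_gt0 [lam_ltp [ord [d_ge3 [d_ltD rho_spec]]]]]]]].
move: rho_spec => [m [[[r [s [r_gt0 [s_gt0 [r_lam_s m_rs]]]] m_min] m_ltR]]].
have d_ltp : d < p by apply: mult_order_lt_prime ord; rewrite ?lam_gt0.
have m_le_lam : m <= lam by apply: m_min; exists lam, 1; rewrite muln1.
have r_ltp : r < p by rewrite m_rs in m_le_lam; nia.
have co_rp : coprime r p by rewrite coprime_sym prime_coprime // gtnNdvd.
have [_ [lam_d lam_min]] := ord; rewrite powE in lam_d.
have r_neq_s : r != s.
  apply/eqP=> eq_rs; move: r_lam_s; rewrite -eq_rs => /eqP.
  rewrite [lam * r]mulnC -{1}[r]muln1 eqn_mod_mul2l_coprime // => /eqP lam1.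
  apply: (lam_min 1) => //; first lia.
  by rewrite powE expn1 -lam1.
have pow_eq : r ^ d = s ^ d %[mod p].
  by rewrite -modnXm r_lam_s modnXm expnMn -modnMml lam_d modnMml mul1n.
have dvd_sub r' s' : s' < r' -> r' ^ d = s' ^ d %[mod p] -> p %| r' ^ d - s' ^ d.
  have d_gt0 : 0 < d by apply: ltn_trans d_ge3.
  move=> lt_sr eq_pow; rewrite -eqn_mod_dvd; first by rewrite eq_pow eqxx.
  by rewrite leq_exp2r // ltnW.
have d_bounds : 2 < d < p by rewrite d_ge3.
case: (ltngtP s r) => [lt_sr|lt_rs|eq_sr]; last by rewrite eq_sr eqxx in r_neq_s.
  by exists d, r, s; rewrite s_gt0 -m_rs (dvd_sub _ _ lt_sr pow_eq).
by exists d, s, r; rewrite r_gt0 mulnC -m_rs (dvd_sub _ _ lt_rs (esym pow_eq)).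
Qed.

Lemma expn_size_le_prime_divisors m n l : 0 < n -> uniq l ->
  (forall q, q \in l -> [&& prime q, q %| n & m <= q]) -> m ^ size l <= n.
Proof.
elim: l n => [|q l IH] n n_gt0 /=; first by rewrite expn0.
move=> /andP[q_notin_l uniq_l] l_spec.
have /and3P[q_pr q_dvd_n m_le_q] := l_spec q (mem_head _ _).
have n_eq : n = q * (n %/ q) by rewrite mulnC divnK.
have quot_gt0 : 0 < n %/ q by rewrite divn_gt0 (prime_gt0, dvdn_leq).
rewrite expnS [X in _ <= X]n_eq leq_mul //; apply: IH => // q' q'_in_l.
have /and3P[q'_pr q'_dvd_n ->] := l_spec q' (mem_behead (s := q :: l) q'_in_l).
have q'_neq_q : q' != q by apply: contraNneq q_notin_l => <-.
move: q'_dvd_n; rewrite {1}n_eq Euclid_dvdM // dvdn_prime2 // (negPf q'_neq_q).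
by move=> /= ->; rewrite q'_pr.
Qed.

Definition large_prime_divisors d n := [seq q <- primes n | d < q].

Lemma large_prime_divisors_size d n : 0 < n ->
  d.+1 ^ size (large_prime_divisors d n) <= n.
Proof.
move=> n_gt0; apply: expn_size_le_prime_divisors => //.
  exact/filter_uniq/primes_uniq.
by move=> q; rewrite mem_filter mem_primes => /andP[-> /and3P[-> _ ->]].
Qed.

Open Scope R_scope.

Lemma INR_expn a b : INR (a ^ b)%nat = INR a ^ b.
Proof. by rewrite -pow_INR powE. Qed.

Lemma INR_muln a b : INR (a * b)%nat = INR a * INR b.
Proof. by rewrite -multE mult_INR. Qed.

Lemma INR_addn a b : INR (a + b)%nat = INR a + INR b.
Proof. by rewrite -plusE plus_INR. Qed.

Lemma leq_INR a b : (a <= b)%nat -> INR a <= INR b.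
Proof. by move/leP; apply: le_INR. Qed.

Lemma ln_le x y : 0 < x -> x <= y -> ln x <= ln y.
Proof. by move=> x_gt0 [lt_xy|->]; [left; apply: ln_increasing | right]. Qed.

Lemma ln_le_sub1 x : 0 < x -> ln x <= x - 1.
Proof. by move=> x_gt0; have := exp_ineq1_le (ln x); rewrite exp_ln //; lra. Qed.

Lemma ln_div x y : 0 < x -> 0 < y -> ln (x / y) = ln x - ln y.
Proof.
move=> x_gt0 y_gt0; have inv_y_gt0 := Rinv_0_lt_compat y y_gt0.
by rewrite /Rdiv ln_mult // ln_Rinv.
Qed.

Lemma half_lt_ln x : 2 <= x -> / 2 < ln x.
Proof. by move=> x_ge2; apply: Rlt_le_trans ln_lt_2 (ln_le _ x_ge2); lra. Qed.

Lemma one_le_ln x : 3 <= x -> 1 <= ln x.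
Proof.
move=> x_ge3; rewrite -(ln_exp 1).
by apply: ln_le; [apply: exp_pos | apply: Rle_trans exp_le_3 x_ge3].
Qed.

(* [ln x / x] is nonincreasing on [3, +oo), since [ln (y / x) <= y / x - 1]. *)
Lemma mul_ln_le_swap x y : 3 <= x -> x <= y -> x * ln y <= y * ln x.
Proof.
move=> x_ge3 le_xy.
have ln_ratio : ln y - ln x <= y / x - 1.
  by rewrite -ln_div; try lra; apply: ln_le_sub1; apply: Rdiv_lt_0_compat; lra.
have ln_x_ge1 := one_le_ln x_ge3.
have : x * (ln y - ln x) <= y - x.
  have -> : y - x = x * (y / x - 1) by field; lra.
  by apply: Rmult_le_compat_l; lra.
nra.
Qed.

Lemma inv_succ_le_ln_succ a : 0 < a -> / (a + 1) <= ln (a + 1) - ln a.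
Proof.
move=> a_gt0; have := @ln_le_sub1 (a / (a + 1)) ltac:(apply: Rdiv_lt_0_compat; lra).
have -> : a / (a + 1) - 1 = - / (a + 1) by field; lra.
by rewrite ln_div; lra.
Qed.

Lemma sumn_divn_iota_le K n : (0 < n)%nat ->
  INR (sumn [seq K %/ r | r <- iota 1 n]) <= INR K * (1 + ln (INR n)).
Proof.
have K_ge0 := pos_INR K.
elim: n => [//|[|n] IH] _; first by rewrite /= divn1 addn0 ln_1; lra.
have -> : sumn [seq K %/ r | r <- iota 1 n.+2] =
          (sumn [seq K %/ r | r <- iota 1 n.+1] + K %/ n.+2)%nat.
  by rewrite -(addn1 n.+1) iotaD map_cat sumn_cat /= add1n addn0 addn1.
rewrite INR_addn S_INR.
set a := INR n.+1; have a_gt0 : 0 < a by apply: lt_0_INR; lia.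
have last_term : INR (K %/ n.+2) <= INR K * / (a + 1).
  apply: (Rmult_le_reg_r (a + 1)); first lra.
  rewrite Rmult_assoc Rinv_l ?Rmult_1_r; last lra.
  by have := leq_INR (leq_divM K n.+2); rewrite INR_muln S_INR.
have := Rmult_le_compat_l _ _ _ K_ge0 (inv_succ_le_ln_succ a_gt0).
have := IH isT; rewrite -/a; lra.
Qed.

Lemma nat_floor x : 0 <= x ->
  exists K : nat, INR K <= x /\ forall n : nat, INR n < x -> (n <= K)%nat.
Proof.
move=> x_ge0; have [up_gt up_le] := archimed x.
have up_gt0 : (0 < up x)%Z by apply: lt_IZR; lra.
exists (Z.to_nat (up x - 1)); split.
  rewrite INR_IZR_INZ Z2Nat.id; last lia.
  by rewrite minus_IZR /=; lra.
move=> n n_ltx; have : (Z.of_nat n < up x)%Z.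
  by apply: lt_IZR; rewrite -INR_IZR_INZ; lra.
lia.
Qed.

Lemma size_flatten_map_le (T U : eqType) (f : T -> seq U) (ts : seq T) c :
  (forall t, t \in ts -> INR (size (f t)) <= c) ->
  INR (size (flatten [seq f t | t <- ts])) <= INR (size ts) * c.
Proof.
elim: ts => [|t ts IH] f_le; first by rewrite /= Rmult_0_l; right.
rewrite map_cons [flatten _]/= size_cat INR_addn [size (_ :: _)]/= S_INR.
have := f_le t (mem_head t ts).
have := IH (fun t' t'_in => f_le t' (mem_behead (s := t :: ts) t'_in)).
lra.
Qed.

Definition mul_le_pairs K := [seq (r, s) | r <- iota 1 K, s <- iota 1 (K %/ r)].

Lemma mem_mul_le_pairs K r s :
  ((r, s) \in mul_le_pairs K) = [&& 0 < r, 0 < s & r * s <= K]%nat.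
Proof.
apply/allpairsPdep/and3P => [[r' [s' [r'_in s'_in [-> ->]]]] | [r_gt0 s_gt0 rs_le]].
  move: r'_in s'_in; rewrite !mem_iota !add1n !ltnS => /andP[r'_gt0 _] /andP[s'_gt0].
  by rewrite leq_divRL // mulnC.
exists r, s; rewrite !mem_iota !add1n !ltnS r_gt0 s_gt0 leq_divRL // mulnC rs_le.
by split=> //; rewrite -(muln1 r) (leq_trans _ rs_le) // leq_mul2l s_gt0 orbT.
Qed.

Lemma size_mul_le_pairs K :
  size (mul_le_pairs K) = sumn [seq K %/ r | r <- iota 1 K].
Proof.
by rewrite size_allpairs_dep; congr sumn; apply: eq_map => r; rewrite size_iota.
Qed.

(* [k <= d ln N / ln (d + 1) <= d ln Rr / ln d], and [x / ln x] is nondecreasing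
   for [x >= 3]. *)
Lemma count_le_of_expn_le k d N D Rr : (3 <= d)%nat -> INR d <= D ->
  (0 < N)%nat -> INR N <= Rr -> (d.+1 ^ k <= N ^ d)%nat ->
  INR k <= D * ln Rr / ln D.
Proof.
move=> d_ge3 d_le_D N_gt0 N_le_R pow_le.
have d_ge3R : 3 <= INR d by have := leq_INR d_ge3; rewrite /=; lra.
have N_ge1 : 1 <= INR N by have := leq_INR N_gt0.
have ln_d_ge1 := one_le_ln d_ge3R.
have ln_D_gt0 : 0 < ln D by have := one_le_ln (Rle_trans _ _ _ d_ge3R d_le_D); lra.
have ln_N_ge0 : 0 <= ln (INR N) by rewrite -ln_1; apply: ln_le; lra.
have ln_N_le : ln (INR N) <= ln Rr by apply: ln_le; lra.
have ln_d_le : ln (INR d) <= ln (INR d + 1) by apply: ln_le; lra.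
have k_ge0 := pos_INR k.
have k_ln_d : INR k * ln (INR d) <= INR d * ln Rr.
  have pow_gt0 : 0 < INR (d.+1 ^ k) by apply: lt_0_INR; apply/ltP; rewrite expn_gt0.
  have := ln_le pow_gt0 (leq_INR pow_le).
  rewrite !INR_expn S_INR !ln_pow; [nra | lra | lra].
have swap := mul_ln_le_swap d_ge3R d_le_D.
apply: (Rmult_le_reg_r (ln D)) => //.
rewrite /Rdiv Rmult_assoc Rinv_l ?Rmult_1_r; last lra.
apply: (Rmult_le_reg_l (ln (INR d))); first lra.
have := Rmult_le_compat_r _ _ _ (Rlt_le _ _ ln_D_gt0) k_ln_d.
have := Rmult_le_compat_r (ln Rr) _ _ ltac:(lra) swap.
nra.
Qed.

Definition candidate_triples Dk K :=
  [seq (d, rs) | d <- iota 3 (Dk - 2), rs <- mul_le_pairs K].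

(* For [r <= s] the truncated difference is [0], which has no prime divisors. *)
Definition candidate_primes (t : nat * (nat * nat)) : seq nat :=
  let: (d, (r, s)) := t in large_prime_divisors d (r ^ d - s ^ d)%nat.

Section Counting.

Variables (D Rr : R) (Dk K : nat).
Hypotheses (Rr_ge2 : 2 <= Rr).
Hypotheses (Dk_le_D : INR Dk <= D) (Dk_max : forall n, INR n < D -> (n <= Dk)%nat).
Hypotheses (K_le_Rr : INR K <= Rr) (K_max : forall n, INR n < Rr -> (n <= K)%nat).

Lemma in_E_mem_candidate_primes p : in_E D Rr p ->
  p \in flatten [seq candidate_primes t | t <- candidate_triples Dk K].
Proof.
move=> p_in_E; have [p_pr _] := p_in_E.
have [d [r [s [/andP[d_ge3 d_ltp] d_ltD /andP[s_gt0 s_ltr] rs_ltR p_dvd]]]] :=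
  in_E_dvdn_pow_sub p_in_E.
apply/flatten_mapP; exists (d, (r, s)).
  apply/allpairsP; exists (d, (r, s)); split=> //=.
    by rewrite mem_iota; have := Dk_max d_ltD; lia.
  by rewrite mem_mul_le_pairs s_gt0 (ltn_trans s_gt0 s_ltr) K_max.
rewrite mem_filter d_ltp mem_primes p_pr p_dvd subn_gt0 ltn_exp2r //.
  by rewrite s_ltr.
by apply: leq_trans d_ge3.
Qed.

Lemma size_candidate_primes_le t : t \in candidate_triples Dk K ->
  INR (size (candidate_primes t)) <= D * ln Rr / ln D.
Proof.
case/allpairsP => [[d [r s]] [/= d_in rs_in ->]].
move: d_in rs_in; rewrite mem_iota mem_mul_le_pairs.
move=> /andP[d_ge3 d_lt] /and3P[r_gt0 s_gt0 rs_le].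
have K_gt0 : (0 < K)%nat by apply: leq_trans rs_le; rewrite muln_gt0 r_gt0.
apply: (count_le_of_expn_le d_ge3 _ K_gt0 K_le_Rr).
  by apply: Rle_trans Dk_le_D; apply: leq_INR; lia.
rewrite /candidate_primes; have [->|n_gt0] := posnP (r ^ d - s ^ d)%nat.
  by rewrite expn_gt0 K_gt0.
apply: leq_trans (large_prime_divisors_size d n_gt0) _.
apply: leq_trans (leq_subr _ _) _; rewrite leq_exp2r; last by apply: ltn_trans d_ge3.
by apply: leq_trans rs_le; rewrite leq_pmulr.
Qed.

Lemma size_candidate_triples_le :
  INR (size (candidate_triples Dk K)) <= D * (Rr * (1 + ln Rr)).
Proof.
rewrite size_allpairs size_iota size_mul_le_pairs INR_muln.
have K_gt0 : (0 < K)%nat by apply: K_max; rewrite /=; lra.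
have K_gt0R : 0 < INR K by apply: lt_0_INR; apply/ltP.
have ln_K_ge0 : 0 <= ln (INR K).
  by rewrite -ln_1; apply: ln_le; [lra | apply: leq_INR K_gt0].
have ln_K_le : ln (INR K) <= ln Rr by apply: ln_le.
have Dk_sub_le : INR (Dk - 2) <= D.
  by apply: Rle_trans Dk_le_D; apply: leq_INR; apply: leq_subr.
apply: Rmult_le_compat => //; first exact: pos_INR.
  exact: pos_INR.
apply: Rle_trans (sumn_divn_iota_le K K_gt0) _.
by apply: Rmult_le_compat; lra.
Qed.

End Counting.

Theorem lemma4p5 :
  exists C : R, forall D Rr : R, (2 <= D)%R -> (2 <= Rr)%R ->
    exists s : seq nat, uniq s /\ (forall p, in_E D Rr p <-> p \in s) /\
      (INR (size s) <= C * (D ^ 2 * Rr * (ln Rr) ^ 2 / ln D))%R.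
Proof.
exists 3 => D Rr D_ge2 Rr_ge2.
have [Dk [Dk_le_D Dk_max]] := nat_floor (x := D) ltac:(lra).
have [K [K_le_Rr K_max]] := nat_floor (x := Rr) ltac:(lra).
set L := flatten [seq candidate_primes t | t <- candidate_triples Dk K].
pose in_Eb p : bool := excluded_middle_informative (in_E D Rr p).
exists (undup [seq p <- L | in_Eb p]); split; first exact: undup_uniq.
split=> [p|].
  rewrite mem_undup mem_filter /in_Eb; case: excluded_middle_informative => // p_in_E.
  by split=> // _; exact: (in_E_mem_candidate_primes Dk_max K_max p_in_E).
have size_E_le : INR (size (undup [seq p <- L | in_Eb p])) <= INR (size L).
  by apply: leq_INR; rewrite (leq_trans (size_undup _)) // size_filter count_size.
have size_L_le := size_flatten_map_le (size_candidate_primes_le Dk_le_D K_le_Rr).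
have size_T_le := size_candidate_triples_le Rr_ge2 Dk_le_D K_le_Rr K_max.
have ln_D_gt0 := half_lt_ln D_ge2; have ln_R_gt0 := half_lt_ln Rr_ge2.
have c_ge0 : 0 <= D * ln Rr / ln D.
  by apply: Rmult_le_pos; [nra | apply/Rlt_le/Rinv_0_lt_compat; lra].
have -> : 3 * (D ^ 2 * Rr * ln Rr ^ 2 / ln D) =
          D * (Rr * (3 * ln Rr)) * (D * ln Rr / ln D).
  by field; lra.
apply: Rle_trans size_E_le _; apply: Rle_trans size_L_le _.
apply: Rmult_le_compat_r => //; apply: Rle_trans size_T_le _.
by apply: Rmult_le_compat_l; [lra | apply: Rmult_le_compat_l; lra].
Qed.
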